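(* Let $\Sigma$ be a theory. For each $M \subseteq \mathcal{T}_Y$, $[M]_\Sigma = \bigcup\{[N]_\Sigma \mid N \text{ is a finite subset of } M\}$.
   Context: $Y$ is a non-empty finite set of attributes and $\mathcal{T}_Y = \{y^i \mid y \in Y, i \in \mathbb{Z}\}$. For $M \subseteq \mathcal{T}_Y$ and $j \in \mathbb{Z}$, $M + j = \{y^{i+j} \mid y^i \in M\}$. A formula is $A \Rightarrow B$ with $A,B$ finite subsets of $\mathcal{T}_Y$; $M \models A \Rightarrow B$ means that for every $i \in \mathbb{Z}$, $A+i \subseteq M$ implies $B+i \subseteq M$. A theory is a set of formulas; $\mathrm{Mod}(\Sigma)$ is the set of all $M \subseteq \mathcal{T}_Y$ in which every formula of $\Sigma$ is true. The semantic closure is $[M]_\Sigma = \bigcap\{N \in \mathrm{Mod}(\Sigma) \mid M \subseteq N\}$. *)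

From Stdlib Require Import ZArith List FinFun.
Import ListNotations.
Open Scope Z_scope.

(* Temporal attributes y^i are represented as pairs (y, i) : Y * Z. *)
Definition tattr (Y : Type) : Type := (Y * Z)%type.

Definition tset (Y : Type) : Type := tattr Y -> Prop.

Definition subset {Y : Type} (M N : tset Y) : Prop := forall t, M t -> N t.

Definition shift {Y : Type} (M : tset Y) (j : Z) : tset Y :=
  fun t => exists t', M t' /\ t = (fst t', snd t' + j).

(* Finite subsets of T_Y are given by lists; [fin A] is the set they denote. *)
Definition fin {Y : Type} (A : list (tattr Y)) : tset Y := fun t => In t A.

Record formula (Y : Type) : Type := Formula { lhs : list (tattr Y); rhs : list (tattr Y) }.
Arguments Formula {Y} _ _.
Arguments lhs {Y} _.
Arguments rhs {Y} _.

Definition models {Y : Type} (M : tset Y) (f : formula Y) : Prop :=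
  forall i : Z, subset (shift (fin (lhs f)) i) M -> subset (shift (fin (rhs f)) i) M.

Definition theory (Y : Type) : Type := formula Y -> Prop.

Definition Mod {Y : Type} (S : theory Y) (M : tset Y) : Prop :=
  forall f, S f -> models M f.

Definition closure {Y : Type} (S : theory Y) (M : tset Y) : tset Y :=
  fun t => forall N, Mod S N -> subset M N -> N t.

From Stdlib Require Import ZArith List FinFun.

(* Compactness: the closures [[N]] of the finite N ⊆ M form a directed family,
   so any finite set of points of their union already lies in a single one.
   Since the premise of each formula is finite, every premise instance inside
   the union lies in some model [[N]] of Σ, which then contains the conclusion.
   Hence the union is a model of Σ containing M, and so contains [M]; the
   converse inclusion is monotonicity of the closure. *)

Section Closure.

Variables (Y : Type) (S : theory Y).

Lemma closure_monotone (A B : tset Y) :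
  subset A B -> subset (closure S A) (closure S B).
Proof.
  intros AB t At N modN BN.
  apply At; [exact modN|].
  intros x Ax; apply BN, AB, Ax.
Qed.

Lemma closure_extensive (A : tset Y) : subset A (closure S A).
Proof. intros t At N _ AN; apply AN, At. Qed.

Lemma Mod_closure (A : tset Y) : Mod S (closure S A).
Proof.
  intros f Sf i lhs_in t t_rhs N modN AN.
  apply (modN f Sf i); [|exact t_rhs].
  intros x x_lhs; apply (lhs_in x x_lhs N modN AN).
Qed.

Definition finitary_closure (M : tset Y) : tset Y :=
  fun t => exists N, subset (fin N) M /\ closure S (fin N) t.

Lemma subset_fin_app (A B : list (tattr Y)) (M : tset Y) :
  subset (fin A) M -> subset (fin B) M -> subset (fin (A ++ B)) M.
Proof.
  intros AM BM t t_in.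
  apply in_app_or in t_in as [t_in | t_in]; [apply AM | apply BM]; exact t_in.
Qed.

Lemma finitary_closure_directed (M : tset Y) (L : list (tattr Y)) :
  (forall x, In x L -> finitary_closure M x) ->
  exists N, subset (fin N) M /\ forall x, In x L -> closure S (fin N) x.
Proof.
  induction L as [|a L IH]; intros L_in.
  - exists nil; split; [intros t [] | intros x []].
  - destruct (L_in a (in_eq a L)) as [N1 [N1M a_cl]].
    destruct IH as [N2 [N2M L_cl]].
    { intros x x_in; apply L_in, in_cons, x_in. }
    exists (N1 ++ N2); split; [exact (subset_fin_app N1 N2 M N1M N2M)|].
    intros x [<- | x_in].
    + apply (closure_monotone (fin N1)); [|exact a_cl].
      intros t t_in; apply in_or_app; left; exact t_in.
    + apply (closure_monotone (fin N2)); [|exact (L_cl x x_in)].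
      intros t t_in; apply in_or_app; right; exact t_in.
Qed.

Lemma Mod_finitary_closure (M : tset Y) : Mod S (finitary_closure M).
Proof.
  intros f Sf i lhs_in.
  set (L := map (fun t => (fst t, snd t + i)) (lhs f)).
  destruct (finitary_closure_directed M L) as [N [NM L_cl]].
  { intros x x_in; apply in_map_iff in x_in as [t [<- t_in]].
    apply lhs_in; exists t; split; [exact t_in | reflexivity]. }
  intros x x_rhs; exists N; split; [exact NM|].
  apply (Mod_closure (fin N) f Sf i); [|exact x_rhs].
  intros y [t [t_in ->]]; apply L_cl, in_map_iff.
  exists t; split; [reflexivity | exact t_in].
Qed.

Lemma subset_finitary_closure (M : tset Y) : subset M (finitary_closure M).
Proof.
  intros t Mt; exists (t :: nil); split.
  - intros x [<- | []]; exact Mt.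
  - apply closure_extensive, in_eq.
Qed.

Lemma finitary_closure_sub_closure (M : tset Y) :
  subset (finitary_closure M) (closure S M).
Proof. intros t [N [NM t_cl]]; exact (closure_monotone (fin N) M NM t t_cl). Qed.

End Closure.

Theorem theorem2 (Y : Type) (HYfin : Finite Y) (HYne : inhabited Y)
  (S : theory Y) (M : tset Y) :
  forall t : tattr Y,
    closure S M t <->
    exists N : list (tattr Y), subset (fin N) M /\ closure S (fin N) t.
Proof.
  intro t; split.
  - intro t_cl.
    exact (t_cl _ (Mod_finitary_closure Y S M) (subset_finitary_closure Y S M)).
  - exact (finitary_closure_sub_closure Y S M t).
Qed.
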